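(* Let $G$ be a topological group such that $G^{\omega}$ is selectively pseudocompact. Then $G^{\kappa}$ is selectively pseudocompact for every cardinal $\kappa \geq \omega$.
   Context: All topological groups are Hausdorff. A space $X$ is selectively pseudocompact if for every sequence $\{U_n:n\in\omega\}$ of nonempty open subsets of $X$ there are points $x_n\in U_n$ ($n\in\omega$) such that the sequence $\{x_n:n\in\omega\}$ has an accumulation point in $X$ (equivalently, there are $x\in X$ and a free ultrafilter $p$ on $\omega$ with $x=p\text{-}\lim_n x_n$, i.e. $\{n: x_n\in U\}\in p$ for every neighbourhood $U$ of $x$). Powers carry the product topology. *)

From HB Require Import structures.
From mathcomp Require Import all_boot all_order all_algebra.
From mathcomp Require Import all_classical all_reals topology.
Set Implicit Arguments. Unset Strict Implicit. Unset Printing Implicit Defensive.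
Local Open Scope classical_set_scope.

Definition is_topological_group (G : topologicalType)
    (mul : G -> G -> G) (inv : G -> G) (e : G) : Prop :=
  [/\ (forall x y z, mul x (mul y z) = mul (mul x y) z),
      (forall x, mul e x = x /\ mul x e = x),
      (forall x, mul (inv x) x = e /\ mul x (inv x) = e),
      continuous (fun p : G * G => mul p.1 p.2) /\ continuous inv &
      hausdorff_space G].

Definition seq_accumulation_point (X : topologicalType) (s : nat -> X) (x : X) :=
  forall V : set X, nbhs x V -> infinite_set [set n | V (s n)].

Definition selectively_pseudocompact (X : topologicalType) : Prop :=
  forall U : nat -> set X, (forall n, open (U n) /\ U n !=set0) ->
    exists s : nat -> X, (forall n, U n (s n)) /\
      exists x : X, seq_accumulation_point s x.

From HB Require Import structures.
From mathcomp Require Import all_boot all_order all_algebra.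
From mathcomp Require Import all_classical all_reals topology.
Set Implicit Arguments. Unset Strict Implicit.
Local Open Scope classical_set_scope.

(* Neither the group structure nor the infinitude of the index set is needed.
   Every nonempty open set of a power X^I contains a basic open set, which
   restricts only finitely many coordinates; so a sequence of nonempty open
   sets U_n of X^I involves only a countable set J of coordinates.  Injecting
   J into nat gives a continuous re-indexing map T : X^nat -> X^I,
   T y = y \o code, whose preimages of the U_n are still nonempty open sets.
   Selections in these preimages with an accumulation point y are mapped by T
   to selections in the U_n accumulating at T y. *)

Lemma seq_accumulation_point_continuous (X Y : topologicalType) (f : X -> Y)
    (s : nat -> X) (x : X) :
  {for x, continuous f} -> seq_accumulation_point s x ->
  seq_accumulation_point (f \o s) (f x).
Proof. by move=> fx sx V /fx; exact: sx. Qed.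

Lemma exists_extension_along_injective (A B C : Type) (c0 : C) (J : set A)
    (code : A -> B) (w : A -> C) :
  {in J &, injective code} -> exists y : B -> C, forall i, J i -> y (code i) = w i.
Proof.
move=> code_inj.
have fiber_value b : exists c : C, forall i, J i -> code i = b -> c = w i.
  have [[i [Ji <-]]|no_preimage] := pselect (exists i, J i /\ code i = b).
    by exists (w i) => j Jj /code_inj eq_ij; rewrite eq_ij // inE.
  by exists c0 => i Ji code_i; exfalso; apply: no_preimage; exists i.
have [y yP] := choice fiber_value.
by exists y => i Ji; exact: yP.
Qed.

Section PowerTopology.
Variables (I : Type) (X : topologicalType).

Lemma ptws_cvg_coordinatewise (F : set_system {ptws I -> X}) (f : {ptws I -> X}) :
  Filter F -> (forall i, (fun g : I -> X => g i) @ F --> f i) -> F --> f.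
Proof.
move=> FF Fi_cvg; apply/cvg_sup => i A /= [_ [[B oB <-] Bfi BA]].
by apply: (filterS BA); apply: Fi_cvg; exact: open_nbhs_nbhs.
Qed.

Definition finite_agreement (z : I -> X) : set_system (I -> X) :=
  [set W | exists F : set I, finite_set F /\
     forall w, (forall i, F i -> w i = z i) -> W w].

Lemma finite_agreement_filter (z : I -> X) : Filter (finite_agreement z).
Proof.
constructor.
- by exists set0; split; [exact: finite_set0|].
- move=> A B [F [fF FA]] [F' [fF' F'B]]; exists (F `|` F').
  split; first by rewrite finite_setU.
  by move=> w wz; split; [apply: FA | apply: F'B] => i ?; apply: wz;
    [left | right].
- by move=> A B AB [F [fF FA]]; exists F; split => // w /FA /AB.
Qed.

Lemma nbhs_ptws_finite_agreement (z : {ptws I -> X}) (W : set {ptws I -> X}) :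
  nbhs z W -> finite_agreement z W.
Proof.
suff : finite_agreement z --> z by apply.
apply: ptws_cvg_coordinatewise => [|i A Azi]; first exact: finite_agreement_filter.
exists [set i]; split; first exact: finite_set1.
by move=> w wz; rewrite /= wz //; exact: nbhs_singleton.
Qed.

Lemma reindex_continuous (J : eqType) (code : I -> J) :
  continuous (fun y : {ptws J -> X} => (fun i => y (code i)) : {ptws I -> X}).
Proof.
move=> y; apply: ptws_cvg_coordinatewise => [|i].
  exact/fmap_filter/nbhs_filter.
exact: (@proj_continuous J (fun _ => X) (code i) y).
Qed.

Lemma open_seq_countable_reindex (x0 : X) (U : nat -> set {ptws I -> X}) :
  (forall n, open (U n) /\ U n !=set0) ->
  exists code : I -> nat, forall n, exists y : nat -> X, U n (fun i => y (code i)).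
Proof.
move=> oU.
have [z Uz] := choice (fun n => (oU n).2).
have [F FP] := choice (fun n => @nbhs_ptws_finite_agreement (z n) (U n)
  (open_nbhs_nbhs (conj (oU n).1 (Uz n)))).
pose J := \bigcup_(n in [set: nat]) F n.
have /pcard_injP [code code_inj] : countable J.
  apply: bigcup_countable; first exact: card_leT.
  by move=> n _; exact/finite_set_countable/(FP n).1.
exists code => n.
have [y yP] := exists_extension_along_injective x0 (z n) code_inj.
by exists y; apply: (FP n).2 => i Fi; apply: yP; exists n.
Qed.

Theorem selectively_pseudocompact_ptws (x0 : X) :
  selectively_pseudocompact {ptws nat -> X} ->
  selectively_pseudocompact {ptws I -> X}.
Proof.
move=> spc_nat U oU.
have [code Ucode] := open_seq_countable_reindex x0 oU.
pose T := fun y : {ptws nat -> X} => (fun i => y (code i)) : {ptws I -> X}.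
have cT : continuous T := @reindex_continuous nat code.
have oTU n : open (T @^-1` U n) /\ T @^-1` U n !=set0.
  by split; [exact: (continuousP _).1 cT _ (oU n).1 | exact: Ucode].
have [s [Ts [y acc_y]]] := spc_nat _ oTU.
exists (T \o s); split; first by move=> n; exact: Ts.
exists (T y); exact: (seq_accumulation_point_continuous (cT y) acc_y).
Qed.

End PowerTopology.

Theorem mainTheorem1 (G : topologicalType) (mul : G -> G -> G) (inv : G -> G)
    (e : G) (hG : is_topological_group mul inv e)
    (hw : selectively_pseudocompact {ptws nat -> G})
    (I : Type) (hI : infinite_set [set: I]) :
  selectively_pseudocompact {ptws I -> G}.
Proof. exact: selectively_pseudocompact_ptws e hw. Qed.
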